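(* Let $\mathbf E$ be a real symmetric $3\times3$ matrix and $\hat{\mathbf e}\in\mathbb R^3$ with $|\hat{\mathbf e}|=1$. Let $\mathbf Q=-\mathbf I+2\hat{\mathbf e}\otimes\hat{\mathbf e}$, $\hat{\mathbf E}=\mathbf Q\mathbf E\mathbf Q^T$, suppose $\hat{\mathbf E}\ne\mathbf E$, and define $$\mathbf a=4\big((\hat{\mathbf e}\cdot\mathbf E\hat{\mathbf e})\hat{\mathbf e}-\mathbf E\hat{\mathbf e}\big),\qquad\mathbf n=\hat{\mathbf e}.$$ Then there exist $\mathbf b_f,\mathbf m_f\in\mathbb R^3$ with $$f\hat{\mathbf E}+(1-f)\mathbf E=\tfrac12(\mathbf b_f\otimes\mathbf m_f+\mathbf m_f\otimes\mathbf b_f)$$ for every $0\le f\le1$ if and only if (CCL1) the middle eigenvalue $\varepsilon_2$ of $\mathbf E$ is $0$ and $\mathrm{rank}\,\mathbf E=2$; (CCL2) $(\mathbf a\cdot\mathbf v_2)(\mathbf n\cdot\mathbf v_2)=0$, where $\mathbf E\mathbf v_2=0$, $|\mathbf v_2|=1$; (CCL3) $\big(\mathrm{tr}(\mathbf E+\hat{\mathbf E})\big)^2-\mathrm{tr}\big((\mathbf E+\hat{\mathbf E})^2\big)\le0$.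
   Context: $\mathbf a\otimes\mathbf n$ denotes the matrix $\mathbf x\mapsto(\mathbf n\cdot\mathbf x)\mathbf a$. *)

From HB Require Import structures.
From mathcomp Require Import all_boot all_order all_algebra.
From mathcomp Require Import reals.
Set Implicit Arguments. Unset Strict Implicit. Unset Printing Implicit Defensive.
Import Order.TTheory GRing.Theory Num.Theory.
Local Open Scope ring_scope.

Definition dotv (R : realType) (n : nat) (u v : 'cV[R]_n) : R := (u^T *m v) 0 0.

Definition tens (R : realType) (n : nat) (a b : 'cV[R]_n) : 'M[R]_n := a *m b^T.

Definition middle_eigenvalue (R : realType) (A : 'M[R]_3) (x : R) : Prop :=
  exists e1 e3 : R, e1 <= x <= e3 /\
    char_poly A = ('X - e1%:P) * ('X - x%:P) * ('X - e3%:P).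

From HB Require Import structures.
From mathcomp Require Import all_boot all_order all_algebra.
From mathcomp Require Import fingroup perm.
From mathcomp Require Import reals ring lra.
Import Order.TTheory GRing.Theory Num.Theory.
Local Open Scope ring_scope.
Set Implicit Arguments. Unset Strict Implicit. Unset Printing Implicit Defensive.

(* Since Q is the half-turn about e, Ehat = E + sym(a (x) e) with a orthogonal
   to e, so E_f := f Ehat + (1 - f) E = E + f sym(a (x) e), and conjugation by Q
   exchanges E_f and E_(1-f).  A symmetric 3x3 matrix is a symmetrized tensor
   product iff its determinant vanishes and its second invariant
   I2 = ((tr S)^2 - tr (S^2)) / 2 is nonpositive.  Along the segment both
   invariants are quadratics in f symmetric about 1/2:
     det E_f = det E + f (1 - f) tr (adj E sym(a (x) e)),
     I2 E_f  = I2 E + f (1 - f) |a|^2 / 4,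
   so the condition for all f in [0, 1] means det E = 0,
   tr (adj E sym(a (x) e)) = 0 and I2 E_(1/2) <= 0, which is (CCL3).  Then
   I2 E < 0, so E has rank 2 and middle eigenvalue 0, and adj E = I2 E v (x) v
   for the unit kernel vector v, which turns the middle condition into
   (a . v) (e . v) = 0. *)

Lemma sum2 (T : nmodType) (F : 'I_2 -> T) : \sum_(i < 2) F i = F 0 + F 1.
Proof. by rewrite !big_ord_recr big_ord0 /= add0r; congr (F _ + F _); apply/val_inj. Qed.

Lemma sum3 (T : nmodType) (F : 'I_3 -> T) : \sum_(i < 3) F i = F 0 + F 1 + F 2.
Proof.
by rewrite !big_ord_recr big_ord0 /= add0r; congr (F _ + F _ + F _); apply/val_inj.
Qed.

Lemma ord3P (i : 'I_3) : [\/ i = 0, i = 1 | i = 2].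
Proof.
by case: i => [[|[|[|//]]] ?]; [constructor 1|constructor 2|constructor 3]; apply/val_inj.
Qed.

Lemma small_ordE :
  (lift (0 : 'I_2) 0 = 1) * (lift (1 : 'I_2) 0 = 0) *
  (lift (0 : 'I_3) 0 = 1) * (lift (0 : 'I_3) 1 = 2) * (lift (1 : 'I_3) 0 = 0) *
  (lift (1 : 'I_3) 1 = 2) * (lift (2 : 'I_3) 0 = 0) * (lift (2 : 'I_3) 1 = 1) *
  (nat_of_ord (0 : 'I_2) = 0%N) * (nat_of_ord (1 : 'I_2) = 1%N) *
  (nat_of_ord (0 : 'I_3) = 0%N) * (nat_of_ord (1 : 'I_3) = 1%N) *
  (nat_of_ord (2 : 'I_3) = 2%N).
Proof. by do !split; try apply/val_inj. Qed.

Lemma mxtrace3 (R : comNzRingType) (A : 'M[R]_3) : \tr A = A 0 0 + A 1 1 + A 2 2.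
Proof. by rewrite /mxtrace sum3. Qed.

Lemma mulmx3E (R : comNzRingType) m n (A : 'M[R]_(m, 3)) (B : 'M[R]_(3, n)) i j :
  (A *m B) i j = A i 0 * B 0 j + A i 1 * B 1 j + A i 2 * B 2 j.
Proof. by rewrite !mxE sum3. Qed.

Lemma det2 (R : comNzRingType) (A : 'M[R]_2) : \det A = A 0 0 * A 1 1 - A 0 1 * A 1 0.
Proof. by rewrite (expand_det_row _ 0) sum2 /cofactor !det_mx11 !mxE !small_ordE; ring. Qed.

Lemma det3 (R : comNzRingType) (A : 'M[R]_3) : \det A =
  A 0 0 * (A 1 1 * A 2 2 - A 1 2 * A 2 1)
  - A 0 1 * (A 1 0 * A 2 2 - A 1 2 * A 2 0)
  + A 0 2 * (A 1 0 * A 2 1 - A 1 1 * A 2 0).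
Proof. by rewrite (expand_det_row _ 0) sum3 /cofactor !det2 !mxE !small_ordE; ring. Qed.

(** * The second invariant *)

Definition I2 (R : numFieldType) (n : nat) (A : 'M[R]_n) : R :=
  2^-1 * (\tr A ^+ 2 - \tr (A *m A)).

Section SecondInvariant.
Variables (R : numFieldType) (n : nat).
Implicit Types A B Q : 'M[R]_n.

Lemma I2_addZ A B f :
  I2 (A + f *: B) = I2 A + f * (\tr A * \tr B - \tr (A *m B)) + f ^+ 2 * I2 B.
Proof.
rewrite /I2 mulmxDl !mulmxDr -!scalemxAl -!scalemxAr !mxtraceD !mxtraceZ.
by rewrite (mxtrace_mulC B A); field.
Qed.

Lemma I2Z k A : I2 (k *: A) = k ^+ 2 * I2 A.
Proof. by rewrite /I2 -scalemxAl -scalemxAr !mxtraceZ; field. Qed.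

Lemma I2_addZ_balanced A B f : I2 (A + B) = I2 A ->
  I2 (A + f *: B) = I2 A - f * (1 - f) * I2 B.
Proof.
rewrite -[B in A + B]scale1r !I2_addZ expr1n !mul1r.
by rewrite -addrA -[RHS]addr0 => /addrI /eqP; rewrite addr_eq0 => /eqP ->; ring.
Qed.

Lemma mxtrace_conj Q A : Q *m Q^T = 1%:M -> \tr (Q *m A *m Q^T) = \tr A.
Proof. by move=> /mulmx1C QTQ; rewrite mxtrace_mulC mulmxA QTQ mul1mx. Qed.

Lemma I2_conj Q A : Q *m Q^T = 1%:M -> I2 (Q *m A *m Q^T) = I2 A.
Proof.
move=> QQT; have QTQ := mulmx1C QQT.
rewrite /I2 (_ : Q *m A *m Q^T *m (Q *m A *m Q^T) = Q *m (A *m A) *m Q^T).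
  by rewrite !mxtrace_conj.
by rewrite !mulmxA -(mulmxA _ Q^T) QTQ mulmx1.
Qed.

Lemma det_conj Q A : Q *m Q^T = 1%:M -> \det (Q *m A *m Q^T) = \det A.
Proof. by move=> QQT; rewrite !det_mulmx mulrAC -det_mulmx QQT det1 mul1r. Qed.

End SecondInvariant.

Section Invariants3.
Variable R : numFieldType.
Implicit Types A B : 'M[R]_3.

Lemma I2_3E A : I2 A =
  A 0 0 * A 1 1 - A 0 1 * A 1 0 + A 0 0 * A 2 2 - A 0 2 * A 2 0
  + A 1 1 * A 2 2 - A 1 2 * A 2 1.
Proof. by rewrite /I2 !mxtrace3 !mulmx3E; field. Qed.

(* Cayley-Hamilton in adjugate form. *)
Lemma adj3 A : \adj A = A *m A - \tr A *: A + (I2 A)%:M.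
Proof.
apply/matrixP => i j; rewrite mxtrace3 I2_3E !mxE sum3 /cofactor det2 !mxE.
by case: (ord3P i) => ->; case: (ord3P j) => ->; rewrite !small_ordE /=; ring.
Qed.

Lemma char_poly3 A :
  char_poly A = 'X^3 - (\tr A)%:P * 'X^2 + (I2 A)%:P * 'X - (\det A)%:P.
Proof.
rewrite /char_poly /char_poly_mx mxtrace3 I2_3E !det3 !mxE /=.
by rewrite !(polyCD, polyCM, polyCN, polyCB); ring.
Qed.

Lemma mxtrace_adj3 A : \tr (\adj A) = I2 A.
Proof. by rewrite adj3 mxtraceD raddfB /= mxtraceZ mxtrace_scalar /I2; field. Qed.

Lemma adj3_kernel A (v : 'cV[R]_3) : A *m v = 0 -> \adj A *m v = I2 A *: v.
Proof.
move=> Av; rewrite adj3 !mulmxDl mulNmx -mulmxA Av -scalemxAl Av scaler0 mulmx0.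
by rewrite oppr0 !add0r mul_scalar_mx.
Qed.

Lemma det_addZ3 A B f :
  \det (A + f *: B) = \det A + f * \tr (\adj A *m B)
                      + f ^+ 2 * \tr (A *m \adj B) + f ^+ 3 * \det B.
Proof. by rewrite !mxtrace3 !mulmx3E !adj3 !det3 !mxE !sum3 !mxtrace3 !I2_3E /=; ring. Qed.

Lemma det_addZ3_balanced A B f : \det B = 0 -> \det (A + B) = \det A ->
  \det (A + f *: B) = \det A + f * (1 - f) * \tr (\adj A *m B).
Proof.
move=> detB; rewrite -[B in A + B]scale1r !det_addZ3 detB expr1n !mul1r !mulr0 !addr0.
by rewrite -addrA -[RHS]addr0 => /addrI /eqP; rewrite addr_eq0 => /eqP ->; ring.
Qed.

End Invariants3.

Section Kernel.
Variable F : fieldType.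

Lemma det_rank_lt n (A : 'M[F]_n) : (\rank A < n)%N -> \det A = 0.
Proof.
apply: contraTeq => detA_neq0; rewrite -leqNgt mxrank_unit //.
by rewrite unitmxE unitfE.
Qed.

Lemma mxrank_row' m n i (A : 'M[F]_(m.+1, n)) : (\rank (row' i A) <= \rank A)%N.
Proof. by rewrite row'Esub rowsubE mxrankM_maxr. Qed.

Lemma mxrank_col' m n j (A : 'M[F]_(m, n.+1)) : (\rank (col' j A) <= \rank A)%N.
Proof. by rewrite -mxrank_tr tr_col' -[\rank A]mxrank_tr mxrank_row'. Qed.

Lemma adj_neq0_rank n (A : 'M[F]_n.+1) : \adj A != 0 -> (n <= \rank A)%N.
Proof.
move=> adjA_neq0.
have [[i j] adjij|adj0] := pickP (fun ij => \adj A ij.1 ij.2 != 0); last first.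
  case/eqP: adjA_neq0; apply/matrixP => i j; rewrite [RHS]mxE.
  by have /negbFE/eqP := adj0 (i, j).
move: adjij; rewrite mxE /cofactor mulf_eq0 negb_or => /andP[_ det_neq0].
have rank_minor : \rank (row' j (col' i A)) = n by rewrite mxrank_unit // unitmxE unitfE.
by rewrite -[X in (X <= _)%N]rank_minor (leq_trans (mxrank_row' _ _) (mxrank_col' _ _)).
Qed.

Lemma kermx_colP m n (A : 'M[F]_(m, n)) (x : 'cV[F]_n) :
  reflect (A *m x = 0) (x^T <= kermx A^T)%MS.
Proof.
apply: (iffP sub_kermxP) => [|Ax]; last by rewrite -trmx_mul Ax trmx0.
by rewrite -trmx_mul => /(congr1 trmx); rewrite trmxK trmx0.
Qed.

Lemma kernel_line n (A : 'M[F]_n.+1) (v w : 'cV[F]_n.+1) : \rank A = n ->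
  v != 0 -> A *m v = 0 -> A *m w = 0 -> exists k, w = k *: v.
Proof.
move=> rankA v_neq0 /kermx_colP Kv /kermx_colP Kw.
have rankK : \rank (kermx A^T) = 1%N by rewrite mxrank_ker mxrank_tr rankA subSnn.
have vK : (v^T == kermx A^T)%MS.
  by rewrite -(mxrank_leqif_eq Kv) rankK rank_rV trmx_eq0 v_neq0.
have /sub_rVP[k wk] : (w^T <= v^T)%MS by rewrite (eqmxP vK).
by exists k; rewrite -[w]trmxK wk linearZ /= trmxK.
Qed.

End Kernel.

Section Tensor.
Variables (R : realType) (n : nat).
Implicit Types (u v w x : 'cV[R]_n) (A : 'M[R]_n).

Lemma dotvC u v : dotv u v = dotv v u.
Proof. by rewrite /dotv -[v^T *m u]trmxK trmx_mul trmxK [in RHS]mxE. Qed.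

Lemma dotv_mulmxr u A v : dotv u (A *m v) = dotv (A^T *m u) v.
Proof. by rewrite /dotv trmx_mul trmxK mulmxA. Qed.

Lemma dotvZr u k v : dotv u (k *: v) = k * dotv u v.
Proof. by rewrite /dotv -scalemxAr mxE. Qed.

Lemma dotvZl k u v : dotv (k *: u) v = k * dotv u v.
Proof. by rewrite dotvC dotvZr dotvC. Qed.

Lemma dotvBr u v w : dotv u (v - w) = dotv u v - dotv u w.
Proof. by rewrite /dotv mulmxBr !mxE -sumrB; apply: eq_bigr => i _; rewrite !mxE. Qed.

Lemma dotvvE v : dotv v v = \sum_i v i 0 ^+ 2.
Proof. by rewrite /dotv mxE; apply: eq_bigr => i _; rewrite mxE expr2. Qed.

Lemma dotv_ge0 v : 0 <= dotv v v.
Proof. by rewrite dotvvE sumr_ge0 // => i _; exact: sqr_ge0. Qed.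

Lemma dotv_eq0 v : (dotv v v == 0) = (v == 0).
Proof.
apply/idP/eqP => [|->]; last by rewrite dotvvE big1 // => i _; rewrite mxE expr0n.
rewrite dotvvE psumr_eq0 => [/allP v0|i _]; last exact: sqr_ge0.
apply/matrixP => i j; rewrite (ord1 j) mxE.
by apply/eqP; rewrite -sqrf_eq0; apply: (implyP (v0 i _)); rewrite ?mem_index_enum.
Qed.

Lemma unit_kernel_vector (B : 'M[R]_n) : (\rank B < n)%N ->
  exists v, B *m v = 0 /\ dotv v v = 1.
Proof.
move=> rankB; pose x := (nz_row (kermx B^T))^T.
have Bx : B *m x = 0 by apply/kermx_colP; rewrite trmxK nz_row_sub.
have x_neq0 : x != 0.
  by rewrite trmx_eq0 nz_row_eq0 -mxrank_eq0 mxrank_ker mxrank_tr -lt0n subn_gt0.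
have xx_gt0 : 0 < dotv x x by rewrite lt_neqAle eq_sym dotv_eq0 x_neq0 dotv_ge0.
exists ((Num.sqrt (dotv x x))^-1 *: x); split; first by rewrite -scalemxAr Bx scaler0.
rewrite dotvZl dotvZr mulrA -expr2 exprVn sqr_sqrtr ?mulVf ?gt_eqF //.
exact: ltW.
Qed.

Lemma mulmx_tens A u v : A *m tens u v = tens (A *m u) v.
Proof. by rewrite /tens mulmxA. Qed.

Lemma tens_mulmx u v A : tens u v *m A = tens u (A^T *m v).
Proof. by rewrite /tens trmx_mul trmxK mulmxA. Qed.

Lemma mxtrace_tens u v : \tr (tens u v) = dotv v u.
Proof. by rewrite /tens mxtrace_mulC /dotv /mxtrace big_ord1. Qed.

Lemma tens_mulmx_tens u v w x : tens u v *m tens w x = dotv v w *: tens u x.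
Proof.
by rewrite /tens mulmxA -(mulmxA u) [v^T *m w]mx11_scalar mul_mx_scalar scalemxAl.
Qed.

Lemma tens_conj A u v : A *m tens u v *m A^T = tens (A *m u) (A *m v).
Proof. by rewrite mulmx_tens tens_mulmx trmxK. Qed.

Definition symt u v : 'M[R]_n := 2^-1 *: (tens u v + tens v u).

Lemma symtE u v i j : symt u v i j = 2^-1 * (u i 0 * v j 0 + v i 0 * u j 0).
Proof. by rewrite !mxE !big_ord1 !mxE. Qed.

Lemma trmx_symt u v : (symt u v)^T = symt u v.
Proof. by rewrite /symt linearZ linearD /tens /= !trmx_mul !trmxK addrC. Qed.

Lemma symt_conj A u v : A *m symt u v *m A^T = symt (A *m u) (A *m v).
Proof. by rewrite /symt -scalemxAr -scalemxAl mulmxDr mulmxDl !tens_conj. Qed.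

Lemma mxtrace_symt u v : \tr (symt u v) = dotv u v.
Proof. by rewrite mxtraceZ mxtraceD !mxtrace_tens (dotvC v); field. Qed.

Lemma mxtrace_mulmx_symt A u v :
  \tr (A *m symt u v) = 2^-1 * (dotv v (A *m u) + dotv u (A *m v)).
Proof. by rewrite -scalemxAr mxtraceZ mulmxDr !mulmx_tens mxtraceD !mxtrace_tens. Qed.

Lemma I2_symt u v : I2 (symt u v) = 4^-1 * (dotv u v ^+ 2 - dotv u u * dotv v v).
Proof.
rewrite /I2 mxtrace_symt /symt -scalemxAl -scalemxAr mulmxDl !mulmxDr.
rewrite !tens_mulmx_tens !mxtraceZ !mxtraceD !mxtraceZ !mxtrace_tens (dotvC v u).
by field.
Qed.

Lemma det_symt u v : (2 < n)%N -> \det (symt u v) = 0.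
Proof.
move=> n_gt2; apply: det_rank_lt; apply: leq_ltn_trans n_gt2.
have rank_tens (x y : 'cV[R]_n) : (\rank (tens x y) <= 1)%N.
  exact: leq_trans (mxrankM_maxr _ _) (rank_leq_row _).
apply: leq_trans (mxrank_scale _ _) _; apply: leq_trans (mxrank_add _ _) _.
by rewrite -[2%N]/(1 + 1)%N leq_add.
Qed.

End Tensor.

(** * Symmetric matrices that are symmetrized tensor products *)

Section Factorization.
Variable R : realType.

Lemma dotv3E (u v : 'cV[R]_3) : dotv u v = u 0 0 * v 0 0 + u 1 0 * v 1 0 + u 2 0 * v 2 0.
Proof. by rewrite /dotv mulmx3E !mxE. Qed.

Lemma dotv_sqr_le3 (u v : 'cV[R]_3) : dotv u v ^+ 2 <= dotv u u * dotv v v.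
Proof.
rewrite -subr_ge0 !dotv3E.
set x := u 0 0; set y := u 1 0; set z := u 2 0.
set x' := v 0 0; set y' := v 1 0; set z' := v 2 0.
have -> : (x * x + y * y + z * z) * (x' * x' + y' * y' + z' * z')
          - (x * x' + y * y' + z * z') ^+ 2
        = (x * y' - y * x') ^+ 2 + (x * z' - z * x') ^+ 2 + (y * z' - z * y') ^+ 2.
  by ring.
by rewrite !addr_ge0 ?sqr_ge0.
Qed.

Lemma I2_symt_le0 (u v : 'cV[R]_3) : I2 (symt u v) <= 0.
Proof. by rewrite I2_symt pmulr_rle0 ?invr_gt0 // subr_le0 dotv_sqr_le3. Qed.

Definition vec3 (x y z : R) : 'cV[R]_3 := \col_(i < 3) nth 0 [:: x; y; z] i.

Lemma sqrt_gram2 (a c b : R) : a <= 0 -> c <= 0 -> b ^+ 2 = a * c ->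
  exists l1 l2 : R, [/\ l1 ^+ 2 = - a, l2 ^+ 2 = - c & l1 * l2 = - b].
Proof.
move=> a_le0 c_le0 gram.
have [a0|a_neq0] := eqVneq a 0.
  have b0 : b = 0 by apply/eqP; rewrite -sqrf_eq0 gram a0 mul0r.
  by exists 0, (Num.sqrt (- c)); rewrite sqr_sqrtr ?oppr_ge0 // a0 b0 expr2 !mul0r oppr0.
have a_lt0 : a < 0 by rewrite lt_neqAle a_neq0.
have sa_neq0 : Num.sqrt (- a) != 0 by rewrite sqrtr_eq0 -ltNge oppr_gt0.
exists (Num.sqrt (- a)), (- b / Num.sqrt (- a)); split.
- by rewrite sqr_sqrtr // oppr_ge0.
- by rewrite expr_div_n sqr_sqrtr ?oppr_ge0 // sqrrN gram; field.
- by field.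
Qed.

Lemma symt_factor_pivot (S : 'M[R]_3) : S^T = S -> S 0 0 != 0 ->
  \det S = 0 -> I2 S <= 0 -> exists u v, S = symt u v.
Proof.
move=> S_sym s00_neq0; have Ssym i j : S j i = S i j by rewrite -[in LHS]S_sym mxE.
rewrite det3 I2_3E (Ssym 0 1) (Ssym 0 2) (Ssym 1 2).
set s00 : R := S 0 0; set s01 : R := S 0 1; set s02 : R := S 0 2.
set s11 : R := S 1 1; set s12 : R := S 1 2; set s22 : R := S 2 2.
move=> detS I2S.
pose a := s00 * s11 - s01 ^+ 2; pose c := s00 * s22 - s02 ^+ 2.
pose b := s00 * s12 - s01 * s02; pose m := s11 * s22 - s12 ^+ 2.
have gram : b ^+ 2 = a * c.
  have : b ^+ 2 - a * c = - s00 * 0 by rewrite -detS /a /b /c; ring.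
  by rewrite mulr0 => /eqP; rewrite subr_eq0 => /eqP.
have minor : s00 ^+ 2 * m = a * s02 ^+ 2 + c * s01 ^+ 2 - 2 * b * s01 * s02.
  have : s00 ^+ 2 * m = s00 * 0 + (a * s02 ^+ 2 + c * s01 ^+ 2 - 2 * b * s01 * s02).
    by rewrite -detS /m /a /b /c; ring.
  by rewrite mulr0 add0r.
have I2E : a + c + m <= 0 by move: I2S; rewrite /a /c /m; lra.
(* If a + c > 0, the binary form of matrix [[a, -b], [-b, c]] is semidefinite,
   which makes m >= 0 and contradicts I2 S <= 0. *)
have ac_le0 : a + c <= 0.
  rewrite leNgt; apply/negP => ac_gt0.
  have : 0 <= (a + c) * (s00 ^+ 2 * m).
    have -> : (a + c) * (s00 ^+ 2 * m) = (a * s02 - b * s01) ^+ 2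
        + (c * s01 - b * s02) ^+ 2 + (a * c - b ^+ 2) * (s01 ^+ 2 + s02 ^+ 2).
      by rewrite minor; ring.
    by rewrite gram subrr mul0r addr0 addr_ge0 ?sqr_ge0.
  rewrite pmulr_rge0 // pmulr_rge0 ?exprn_even_gt0 //; lra.
have ac_ge0 : 0 <= a * c by rewrite -gram sqr_ge0.
have a_le0 : a <= 0.
  by rewrite leNgt; apply/negP => a_gt0; move: ac_ge0; rewrite pmulr_rge0 //; lra.
have c_le0 : c <= 0.
  by rewrite leNgt; apply/negP => c_gt0; move: ac_ge0; rewrite pmulr_lge0 //; lra.
(* (0, l1, l2) (x) (0, l1, l2) = (S e0) (x) (S e0) - s00 S, so that
   s00 S = sym((S e0 - l) (x) (S e0 + l)). *)
have [l1 [l2 [l1E l2E l12E]]] := sqrt_gram2 a_le0 c_le0 gram.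
exists (vec3 1 ((s01 - l1) / s00) ((s02 - l2) / s00)), (vec3 s00 (s01 + l1) (s02 + l2)).
apply/matrixP => i j; rewrite symtE !mxE.
case: (ord3P i) => ->; case: (ord3P j) => ->.
all: rewrite ?(Ssym 0 1) ?(Ssym 0 2) ?(Ssym 1 2) !small_ordE /=.
all: rewrite /a /b /c /s00 /s01 /s02 /s11 /s12 /s22 in l1E l2E l12E *.
all: first [by field | by field: l1E | by field: l2E | by field: l12E].
Qed.

Lemma perm_conjE (s : 'S_3) (A : 'M[R]_3) i j :
  (perm_mx s *m A *m (perm_mx s)^T) i j = A (s i) (s j).
Proof. by rewrite tr_perm_mx -row_permE -col_permE !mxE. Qed.

Lemma perm_mx_orth n (s : 'S_n) : perm_mx s *m (perm_mx s)^T = 1%:M :> 'M[R]_n.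
Proof. by rewrite tr_perm_mx -perm_mxM mulgV perm_mx1. Qed.

Lemma symt_factor (S : 'M[R]_3) : S^T = S -> \det S = 0 -> I2 S <= 0 ->
  exists u v, S = symt u v.
Proof.
move=> S_sym detS I2S; have Ssym i j : S j i = S i j by rewrite -[in LHS]S_sym mxE.
have [k Skk|zero_diag] := pickP (fun k : 'I_3 => S k k != 0).
  pose P : 'M[R]_3 := perm_mx (tperm 0 k).
  have PPT : P *m P^T = 1%:M by apply: perm_mx_orth.
  have PTP := mulmx1C PPT.
  have [u [v uvE]] : exists u v, P *m S *m P^T = symt u v.
    apply: symt_factor_pivot; rewrite ?det_conj ?I2_conj ?perm_conjE ?tpermL //.
    by rewrite !trmx_mul trmxK S_sym mulmxA.
  exists (P^T *m u), (P^T *m v).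
  by rewrite -symt_conj -uvE trmxK !mulmxA PTP mul1mx -mulmxA PTP mulmx1.
have S_diag i : S i i = 0 by apply/eqP; move/negbFE: (zero_diag i).
move: detS; rewrite det3 !S_diag (Ssym 0 1) (Ssym 0 2) (Ssym 1 2).
have -> : forall x y z : R,
    0 * (0 * 0 - z * z) - x * (x * 0 - z * y) + y * (x * z - 0 * y) = 2 * x * y * z.
  by move=> x y z; ring.
move=> /eqP; rewrite !mulf_eq0 pnatr_eq0 /= => /orP[/orP[]|] /eqP Sij0;
  [ exists (vec3 0 0 1), (vec3 (2 * S 0 2) (2 * S 1 2) 0)
  | exists (vec3 0 1 0), (vec3 (2 * S 0 1) 0 (2 * S 1 2))
  | exists (vec3 1 0 0), (vec3 0 (2 * S 0 1) (2 * S 0 2)) ].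
all: apply/matrixP => i j; rewrite symtE !mxE.
all: case: (ord3P i) => ->; case: (ord3P j) => ->.
all: by rewrite ?S_diag ?(Ssym 0 1) ?(Ssym 0 2) ?(Ssym 1 2) !small_ordE /= ?Sij0; field.
Qed.

Lemma symtP (S : 'M[R]_3) : S^T = S ->
  (exists u v, S = symt u v) <-> \det S = 0 /\ I2 S <= 0.
Proof.
move=> S_sym; split=> [[u [v ->]]|[detS I2S]]; last exact: symt_factor.
by split; [exact: det_symt | exact: I2_symt_le0].
Qed.

End Factorization.

(** * Symmetric 3x3 matrices of rank 2 *)

Section Rank2.
Variable R : realType.
Implicit Types A E : 'M[R]_3.

Lemma middle_eigenvalue0_det A : middle_eigenvalue A 0 -> \det A = 0.
Proof.
move=> [e1 [e3 [_ cpA]]]; have := char_poly_det A.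
rewrite -horner_coef0 cpA !hornerM !hornerXsubC subrr mulr0 mul0r.
by move/esym/eqP; rewrite mulf_eq0 signr_eq0 => /eqP.
Qed.

Lemma middle_eigenvalue0 A : \det A = 0 -> I2 A <= 0 -> middle_eigenvalue A 0.
Proof.
move=> detA I2A; set t := \tr A; set d := t ^+ 2 - 4 * I2 A.
have d_ge0 : 0 <= d by rewrite /d; have := sqr_ge0 t; lra.
have t_le : `|t| <= Num.sqrt d by rewrite -sqrtr_sqr ler_sqrt // /d; lra.
have sd2 : Num.sqrt d ^+ 2 = d by rewrite sqr_sqrtr.
exists ((t - Num.sqrt d) / 2), ((t + Num.sqrt d) / 2); split.
  have := ler_norm t; have := ler_norm (- t); rewrite normrN.
  by move=> ? ?; apply/andP; split; lra.
have I2E : I2 A = (t - Num.sqrt d) / 2 * ((t + Num.sqrt d) / 2).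
  rewrite [RHS](_ : _ = (t ^+ 2 - Num.sqrt d ^+ 2) / 4); last by field.
  by rewrite sd2 /d; field.
set u := (t - Num.sqrt d) / 2; set w := (t + Num.sqrt d) / 2.
have tE : t = u + w by rewrite /u /w; field.
by rewrite char_poly3 detA -/t I2E -/u -/w tE polyC0 (polyCD u w) (polyCM u w); ring.
Qed.

(* The range of adj E lies in the kernel line of E, and adj E v = I2 E v. *)
Lemma adj_sym_kernel E (v x : 'cV[R]_3) : E^T = E -> \rank E = 2%N ->
  E *m v = 0 -> dotv v v = 1 -> \adj E *m x = (I2 E * dotv v x) *: v.
Proof.
move=> E_sym rankE Ev vv.
have v_neq0 : v != 0 by rewrite -dotv_eq0 vv oner_neq0.
have detE : \det E = 0 by rewrite det_rank_lt // rankE.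
have [|k adjEx] := kernel_line rankE v_neq0 Ev (w := \adj E *m x).
  by rewrite mulmxA mul_mx_adj detE mul_scalar_mx scale0r.
have : dotv v (\adj E *m x) = k by rewrite adjEx dotvZr vv mulr1.
rewrite dotv_mulmxr trmx_adj E_sym adj3_kernel // dotvZl => kE.
by rewrite adjEx kE.
Qed.

Lemma mxtrace_adj_symt E (v x y : 'cV[R]_3) : E^T = E -> \rank E = 2%N ->
  E *m v = 0 -> dotv v v = 1 ->
  \tr (\adj E *m symt x y) = I2 E * dotv x v * dotv y v.
Proof.
move=> E_sym rankE Ev vv.
rewrite mxtrace_mulmx_symt (adj_sym_kernel x E_sym rankE Ev vv).
by rewrite (adj_sym_kernel y E_sym rankE Ev vv) !dotvZr !(dotvC v); field.
Qed.

Lemma rank2_kernel_criterion E (x y : 'cV[R]_3) : E^T = E -> I2 E < 0 ->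
  (\det E = 0 /\ \tr (\adj E *m symt x y) = 0) <->
  ((middle_eigenvalue E 0 /\ \rank E = 2%N) /\
   (forall v, E *m v = 0 -> dotv v v = 1 -> dotv x v * dotv y v = 0)).
Proof.
move=> E_sym I2E_lt0; have I2E_neq0 := ltr0_neq0 I2E_lt0.
split=> [[detE adj_xy0]|[[midE rankE] kerE]].
  have rankE : \rank E = 2%N.
    have adjE_neq0 : \adj E != 0.
      by apply: contra_neq I2E_neq0 => adjE0; rewrite -mxtrace_adj3 adjE0 linear0.
    apply/eqP; rewrite eqn_leq adj_neq0_rank // andbT -ltnS ltn_neqAle rank_leq_row.
    by rewrite andbT -/(row_free E) row_free_unit unitmxE unitfE detE eqxx.
  split; first by split=> //; apply: middle_eigenvalue0 => //; exact: ltW.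
  move=> v Ev vv; move: adj_xy0; rewrite (mxtrace_adj_symt x y E_sym rankE Ev vv).
  by rewrite -mulrA => /eqP; rewrite mulf_eq0 (negPf I2E_neq0) => /eqP.
split; first exact: middle_eigenvalue0_det.
have [v [Ev vv]] : exists v, E *m v = 0 /\ dotv v v = 1.
  by apply: unit_kernel_vector; rewrite rankE.
by rewrite (mxtrace_adj_symt x y E_sym rankE Ev vv) -mulrA kerE // mulr0.
Qed.

End Rank2.

Section Bump.
Variable R : realFieldType.

Lemma bump_eq0 (c0 c1 : R) :
  (forall f, 0 <= f <= 1 -> c0 + f * (1 - f) * c1 = 0) <-> c0 = 0 /\ c1 = 0.
Proof.
split=> [bump0|[-> ->] f _]; last by rewrite mulr0 addr0.
have c00 : c0 = 0.
  by have := bump0 0; rewrite !mul0r addr0; apply; rewrite lexx ler01.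
have : 2^-1 * (1 - 2^-1) * c1 = 0.
  by have := bump0 2^-1; rewrite c00 add0r; apply; apply/andP; split; lra.
by split=> //; lra.
Qed.

Lemma bump_le0 (c0 c : R) : 0 <= c ->
  (forall f, 0 <= f <= 1 -> c0 + f * (1 - f) * c <= 0) <-> c0 + c / 4 <= 0.
Proof.
move=> c_ge0; split=> [bump_le|bound f _].
  have := bump_le 2^-1; rewrite (_ : 2^-1 * (1 - 2^-1) * c = c / 4); last by field.
  by apply; apply/andP; split; lra.
have := mulr_ge0 (sqr_ge0 (f - 2^-1)) c_ge0.
rewrite (_ : c0 + f * (1 - f) * c = c0 + c / 4 - (f - 2^-1) ^+ 2 * c); last by field.
set q := _ * c; lra.
Qed.

End Bump.

(** * Conjugation by the half-turn about e *)

Section HalfTurn.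
Variables (R : realType) (E : 'M[R]_3) (e : 'cV[R]_3).
Hypotheses (E_sym : E^T = E) (e_unit : dotv e e = 1).
Let Q : 'M[R]_3 := - 1%:M + 2 *: tens e e.
Let a : 'cV[R]_3 := 4 *: (dotv e (E *m e) *: e - E *m e).

Lemma halfturn_orth : Q *m Q^T = 1%:M.
Proof.
have P_sym : (tens e e)^T = tens e e by rewrite /tens trmx_mul trmxK.
have PP : tens e e *m tens e e = tens e e by rewrite tens_mulmx_tens e_unit scale1r.
rewrite /Q raddfD /= raddfN /= linearZ /= trmx1 P_sym.
rewrite mulmxDl !mulmxDr !mulNmx !mulmxN !mul1mx mulmx1 opprK -!scalemxAl -!scalemxAr PP.
rewrite scalerA -!scaleNr -addrA -!scalerDl.
by rewrite (_ : -2 + (-2 + 2 * 2) = 0 :> R) ?scale0r ?addr0 //; ring.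
Qed.

Lemma halfturn_conj : Q *m E *m Q^T = E + symt a e.
Proof.
have Esym i j : E j i = E i j by rewrite -[in LHS]E_sym mxE.
apply/matrixP => i j; rewrite [RHS]mxE symtE /Q /a !dotv3E !(mxE, sum3, big_ord1).
case: (ord3P i) => ->; case: (ord3P j) => ->.
all: by rewrite ?(Esym 0 1) ?(Esym 0 2) ?(Esym 1 2) /=; field.
Qed.

Lemma jump_perp : dotv a e = 0.
Proof. by rewrite /a dotvC dotvZr dotvBr dotvZr e_unit mulr1 subrr mulr0. Qed.

Lemma jump_neq0 : Q *m E *m Q^T != E -> a != 0.
Proof.
apply: contra_neq => a0; rewrite halfturn_conj a0 /symt /tens trmx0 mulmx0 mul0mx.
by rewrite addr0 scaler0 addr0.
Qed.

Lemma det_halfturn_path f : \det (E + f *: symt a e) =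
  \det E + f * (1 - f) * \tr (\adj E *m symt a e).
Proof.
apply: det_addZ3_balanced; first exact: det_symt.
by rewrite -halfturn_conj det_conj // halfturn_orth.
Qed.

Lemma I2_halfturn_path f :
  I2 (E + f *: symt a e) = I2 E + f * (1 - f) * (dotv a a / 4).
Proof.
rewrite I2_addZ_balanced; last by rewrite -halfturn_conj I2_conj // halfturn_orth.
by rewrite I2_symt jump_perp e_unit; field.
Qed.

Lemma halfturn_mean_invariant (Ehat := Q *m E *m Q^T) :
  (\tr (E + Ehat)) ^+ 2 - \tr ((E + Ehat) *m (E + Ehat)) =
  8 * (I2 E + dotv a a / 4 / 4).
Proof.
have -> : E + Ehat = 2 *: (E + 2^-1 *: symt a e).
  by rewrite /Ehat halfturn_conj; apply/matrixP => i j; rewrite !mxE; field.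
transitivity (2 * I2 (2 *: (E + 2^-1 *: symt a e))); first by rewrite /I2; field.
by rewrite I2Z I2_halfturn_path; field.
Qed.

Lemma halfturn_path_iff :
  (forall f : R, 0 <= f <= 1 -> exists u v,
     f *: (Q *m E *m Q^T) + (1 - f) *: E = symt u v) <->
  (\det E = 0 /\ \tr (\adj E *m symt a e) = 0) /\ I2 E + dotv a a / 4 / 4 <= 0.
Proof.
have pathE f : f *: (Q *m E *m Q^T) + (1 - f) *: E = E + f *: symt a e.
  by rewrite halfturn_conj scalerDr addrAC -scalerDl (addrC f) subrK scale1r.
have path_sym f : (E + f *: symt a e)^T = E + f *: symt a e.
  by rewrite linearD linearZ /= E_sym trmx_symt.
have aa4_ge0 : 0 <= dotv a a / 4 by rewrite divr_ge0 ?dotv_ge0.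
split=> [path_symt|[[detE adj0] I2_le0] f f01].
  have {}path_symt f : 0 <= f <= 1 ->
      \det (E + f *: symt a e) = 0 /\ I2 (E + f *: symt a e) <= 0.
    by move=> /path_symt; rewrite pathE => /(symtP (path_sym f)).
  split; first by apply/bump_eq0 => f /path_symt[]; rewrite det_halfturn_path.
  by apply/(bump_le0 _ aa4_ge0) => f /path_symt[_]; rewrite I2_halfturn_path.
rewrite pathE; apply/(symtP (path_sym f)).
rewrite det_halfturn_path I2_halfturn_path detE adj0 mulr0 addr0; split=> //.
exact: (bump_le0 _ aa4_ge0).2.
Qed.

End HalfTurn.

Unset Implicit Arguments. Set Strict Implicit.

Theorem theorem4 (R : realType) (E : 'M[R]_3) (e : 'cV[R]_3) :
  E^T = E ->
  dotv e e = 1 ->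
  let Q : 'M[R]_3 := - 1%:M + 2 *: tens e e in
  let Ehat : 'M[R]_3 := Q *m E *m Q^T in
  Ehat != E ->
  let a : 'cV[R]_3 := 4 *: (dotv e (E *m e) *: e - E *m e) in
  let n : 'cV[R]_3 := e in
  (forall f : R, 0 <= f <= 1 ->
     exists b m : 'cV[R]_3,
       f *: Ehat + (1 - f) *: E = 2^-1 *: (tens b m + tens m b))
  <->
  [/\ (middle_eigenvalue E 0 /\ \rank E = 2%N),
      (forall v2 : 'cV[R]_3, E *m v2 = 0 -> dotv v2 v2 = 1 ->
          dotv a v2 * dotv n v2 = 0)
    & (\tr (E + Ehat)) ^+ 2 - \tr ((E + Ehat) *m (E + Ehat)) <= 0].
Proof.
move=> E_sym e_unit Q Ehat Ehat_neqE a n.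
have aa_gt0 : 0 < dotv a a.
  by rewrite lt_neqAle eq_sym dotv_eq0 jump_neq0 // dotv_ge0.
have ccl3E : (\tr (E + Ehat)) ^+ 2 - \tr ((E + Ehat) *m (E + Ehat)) <= 0 <->
    I2 E + dotv a a / 4 / 4 <= 0.
  by rewrite halfturn_mean_invariant // pmulr_rle0.
have I2E_lt0 : I2 E + dotv a a / 4 / 4 <= 0 -> I2 E < 0.
  have : 0 < dotv a a / 4 / 4 by rewrite !divr_gt0.
  lra.
split=> [/(halfturn_path_iff E_sym e_unit) [ccl12 K_le0]|[ccl1 ccl2 /ccl3E K_le0]].
  have [ccl1 ccl2] := (rank2_kernel_criterion a e E_sym (I2E_lt0 K_le0)).1 ccl12.
  by split=> //; apply/ccl3E.
apply/(halfturn_path_iff E_sym e_unit); split=> //.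
by apply/(rank2_kernel_criterion a e E_sym (I2E_lt0 K_le0)).
Qed.
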